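(* Let $\phi:M_2\to M_2$ be a linear map with $\sigma_{\mathcal{K}}(\phi(A))=\sigma_{\mathcal{K}}(A)$ for all $A\in M_2$. Then $\phi(E_{11}+E_{21})$ is singular.
   Context: $M_2$ is the space of real $2\times2$ matrices and $E_{ij}$ is the matrix with $1$ in position $(i,j)$ and $0$ elsewhere. Lorentz cone $\mathcal{K}=\{(x_1,x_2)^T:|x_1|\le x_2\}$; a real $\lambda$ is an L-eigenvalue of $A$ if there is a nonzero $x\in\mathcal{K}$ with $(A-\lambda I)x\in\mathcal{K}$ and $x^T(A-\lambda I)x=0$; $\sigma_{\mathcal{K}}(A)$ is the set of L-eigenvalues. *)

From mathcomp Require Import all_boot all_order all_algebra.
From mathcomp Require Import reals.
Set Implicit Arguments. Unset Strict Implicit. Unset Printing Implicit Defensive.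
Import Order.TTheory GRing.Theory Num.Theory.
Local Open Scope ring_scope.

Definition lorentz_cone {R : realType} (x : 'cV[R]_2) : Prop :=
  `|x ord0 ord0| <= x (inord 1) ord0.

Definition L_eigenvalue {R : realType} (A : 'M[R]_2) (lam : R) : Prop :=
  exists x : 'cV[R]_2, x != 0 /\ lorentz_cone x /\
    lorentz_cone ((A - lam%:M) *m x) /\ (x^T *m (A - lam%:M) *m x) = 0.

Definition L_spectrum {R : realType} (A : 'M[R]_2) : R -> Prop :=
  fun lam => L_eigenvalue A lam.

(* E_ij, 0-based indices *)
Definition Eij {R : realType} (i j : 'I_2) : 'M[R]_2 := delta_mx i j.

From mathcomp Require Import all_boot all_order all_algebra.
From mathcomp Require Import reals.
From mathcomp Require Import lra ring.
Set Implicit Arguments. Unset Strict Implicit. Unset Printing Implicit Defensive.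
Import Order.TTheory GRing.Theory Num.Theory.
Local Open Scope ring_scope.

(* The Lorentz cone of R^2 is spanned by the rays of (1, 1) and (-1, 1), so
   for x, y in the cone, x^T y = 0 forces y = 0 or x, y on opposite boundary
   rays, which turns L-eigenvalues of a 2 x 2 matrix into three explicit
   alternatives on its entries.
   The matrix A = E11 + E21 has L-eigenvalues 0 (eigenvector (0, 1)) and
   1 (eigenvector (1, 1)), and 0 is one for -A; by linearity B = phi(A) has
   the same.  The conditions at 0 for B and -B leave only a singular B or
   B = [[p, q], [-q, -p]] with p^2 <= q^2, and the latter has no L-eigenvalue
   other than 0. *)

Section LorentzConeArithmetic.
Variable R : realDomainType.

Lemma lorentz_complementarity (x1 x2 y1 y2 : R) :
  `|x1| <= x2 -> `|y1| <= y2 -> x1 * y1 + x2 * y2 = 0 ->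
  (x2 - x1) * (y2 - y1) = 0 /\ (x2 + x1) * (y2 + y1) = 0.
Proof.
move=> /ler_normlP[? ?] /ler_normlP[? ?] xy0.
have minus_ge0 : 0 <= (x2 - x1) * (y2 - y1) by apply: mulr_ge0; lra.
have plus_ge0 : 0 <= (x2 + x1) * (y2 + y1) by apply: mulr_ge0; lra.
have : (x2 - x1) * (y2 - y1) + (x2 + x1) * (y2 + y1) = 2 * (x1 * y1 + x2 * y2).
  by ring.
rewrite xy0 mulr0 => sum0; split; lra.
Qed.

(* The three ways [x, y = (B - lam) x] can be complementary in the cone:
   [y = 0], or [x] on the ray of [(1, 1)] and [y] on that of [(-1, 1)], or
   the reverse. *)
Definition L_eigen_cond (p q r s lam : R) : Prop :=
  [\/ (p - lam) * (s - lam) - q * r = 0,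
      2 * lam = p + q + r + s /\ p + q <= r + s
    | 2 * lam = p - q - r + s /\ p + r <= q + s].

Lemma L_eigen_cond_of_witness (p q r s lam x1 x2 y1 y2 : R) :
  y1 = (p - lam) * x1 + q * x2 -> y2 = r * x1 + (s - lam) * x2 ->
  0 < x2 -> `|x1| <= x2 -> `|y1| <= y2 -> x1 * y1 + x2 * y2 = 0 ->
  L_eigen_cond p q r s lam.
Proof.
move=> y1E y2E x2_gt0 Kx Ky xy0.
have [minus0 plus0] := lorentz_complementarity Kx Ky xy0.
move/ler_normlP: Ky => [y1_ge y1_le].
have [x1E|x1_neq] := eqVneq x1 x2.
  subst x1; have y_sum0 : y2 + y1 = 0 by nra.
  by apply: Or32; split; nra.
have [x1E|x1_neq'] := eqVneq x1 (- x2).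
  subst x1; have y_diff0 : y2 - y1 = 0 by nra.
  by apply: Or33; split; nra.
have y_diff0 : y2 - y1 = 0.
  by move/eqP: minus0; rewrite mulf_eq0 subr_eq0 eq_sym (negbTE x1_neq) => /eqP.
have y_sum0 : y2 + y1 = 0.
  by move/eqP: plus0; rewrite mulf_eq0 [x2 + x1]addrC addr_eq0 (negbTE x1_neq') => /eqP.
apply: Or31; apply: (mulIf (lt0r_neq0 x2_gt0)); rewrite mul0r.
transitivity ((p - lam) * y2 - r * y1); first by rewrite y1E y2E; ring.
have [-> ->] : y1 = 0 /\ y2 = 0 by lra.
by rewrite !mulr0 subr0.
Qed.

Lemma L_eigen_cond_eq0 (p q lam : R) :
  p ^+ 2 <= q ^+ 2 -> L_eigen_cond p q (- q) (- p) lam -> lam = 0.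
Proof.
move=> pq; case=> [det0|[sum0 _]|[sum0 _]]; [|lra|lra].
apply/eqP; rewrite -sqrf_eq0 eq_le sqr_ge0 andbT; nra.
Qed.

Lemma det_eq0_of_L_eigen_conds (p q r s : R) :
  L_eigen_cond p q r s 0 -> L_eigen_cond p q r s 1 ->
  L_eigen_cond (- p) (- q) (- r) (- s) 0 -> p * s - q * r = 0.
Proof.
move=> cond0 cond1 condN.
have skew_false : s = - p -> r = - q -> p ^+ 2 <= q ^+ 2 -> False.
  move=> s_eq r_eq pq; rewrite s_eq r_eq in cond1.
  by have /eqP := L_eigen_cond_eq0 pq cond1; rewrite oner_eq0.
case: cond0 => [|[sum0 le0]|[alt0 le0]]; first by rewrite !subr0.
all: case: condN => [|[sumN leN]|[altN leN]]; first by rewrite !subr0 !mulrNN.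
- have -> : s = - r by lra.
  have -> : q = - p by lra.
  ring.
- by exfalso; apply: skew_false; [lra | lra | nra].
- by exfalso; apply: skew_false; [lra | lra | nra].
- have -> : s = r by lra.
  have -> : q = p by lra.
  ring.
Qed.

End LorentzConeArithmetic.

Local Notation i1 := (inord 1 : 'I_2).

Lemma inord1_eq0F : (i1 == ord0) = false.
Proof. by rewrite -val_eqE /= inordK. Qed.

Lemma ord0_eq_inord1F : (ord0 == i1) = false.
Proof. by rewrite eq_sym inord1_eq0F. Qed.

Lemma ord2P (i : 'I_2) : i = ord0 \/ i = i1.
Proof.
by case: i => [[|[|//]]] ?; [left | right]; apply/val_inj; rewrite /= ?inordK.
Qed.

Lemma sum_ord2 (V : nmodType) (f : 'I_2 -> V) : \sum_i f i = f ord0 + f i1.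
Proof.
by rewrite big_ord_recl big_ord1; congr (_ + f _); apply/val_inj; rewrite /= inordK.
Qed.

Section TwoByTwo.
Variable R : comRingType.

Lemma mulmx2E m n (A : 'M[R]_(m, 2)) (B : 'M[R]_(2, n)) i j :
  (A *m B) i j = A i ord0 * B ord0 j + A i i1 * B i1 j.
Proof. by rewrite mxE sum_ord2. Qed.

Lemma det_mx2 (A : 'M[R]_2) :
  \det A = A ord0 ord0 * A i1 i1 - A ord0 i1 * A i1 ord0.
Proof.
rewrite (expand_det_row _ ord0) sum_ord2 /cofactor !det_mx11 !mxE.
have -> : lift ord0 ord0 = i1 by apply/val_inj; rewrite /= inordK.
have -> : lift i1 ord0 = ord0 by apply/val_inj; rewrite /= /bump /= inordK.
rewrite /= inordK // expr0 expr1 mul1r mulN1r.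
ring.
Qed.

End TwoByTwo.

Section LorentzCone.
Variable R : realType.

Lemma lorentz_cone_gt0 (x : 'cV[R]_2) :
  x != 0 -> lorentz_cone x -> 0 < x i1 ord0.
Proof.
move=> x_neq0 Kx; rewrite lt_def (le_trans (normr_ge0 _) Kx) andbT.
apply: contraNneq x_neq0 => x1_0; apply/eqP/matrixP => i j; rewrite [j]ord1 mxE.
by case: (ord2P i) => -> //; apply/eqP; rewrite -normr_le0 -x1_0.
Qed.

Lemma lorentz_cone_neq0 (x : 'cV[R]_2) : 0 < x i1 ord0 -> x != 0.
Proof. by apply: contraTneq => ->; rewrite mxE ltxx. Qed.

Lemma L_eigenvalue_cond (B : 'M[R]_2) lam : L_eigenvalue B lam ->
  L_eigen_cond (B ord0 ord0) (B ord0 i1) (B i1 ord0) (B i1 i1) lam.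
Proof.
case=> x [x_neq0 [Kx [Ky xy0]]].
apply: (L_eigen_cond_of_witness _ _ (lorentz_cone_gt0 x_neq0 Kx) Kx Ky).
- by rewrite mulmx2E !mxE eqxx ord0_eq_inord1F subr0.
- by rewrite mulmx2E !mxE eqxx inord1_eq0F subr0.
- by move/matrixP/(_ ord0 ord0): xy0; rewrite -mulmxA mulmx2E !mxE.
Qed.

Lemma eigenvector_L_eigenvalue (B : 'M[R]_2) lam (x : 'cV[R]_2) :
  x != 0 -> lorentz_cone x -> B *m x = lam *: x -> L_eigenvalue B lam.
Proof.
move=> x_neq0 Kx Bx.
have y0 : (B - lam%:M) *m x = 0 by rewrite mulmxBl mul_scalar_mx Bx subrr.
exists x; rewrite -mulmxA y0 mulmx0; do !split => //.
by rewrite /lorentz_cone !mxE normr0.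
Qed.

End LorentzCone.

Theorem lemma4p2 (R : realType) (phi : {linear 'M[R]_2 -> 'M[R]_2})
  (Hphi : forall A : 'M[R]_2, forall lam : R, L_spectrum (phi A) lam <-> L_spectrum A lam) :
  \det (phi (Eij ord0 ord0 + Eij (inord 1) ord0)) = 0.
Proof.
set A := Eij ord0 ord0 + Eij (inord 1) ord0.
set e1 : 'cV[R]_2 := delta_mx i1 ord0.
set u : 'cV[R]_2 := delta_mx ord0 ord0 + delta_mx i1 ord0.
have e1_cone : lorentz_cone e1.
  by rewrite /lorentz_cone !mxE ord0_eq_inord1F !eqxx normr0.
have u_cone : lorentz_cone u.
  by rewrite /lorentz_cone !mxE ord0_eq_inord1F inord1_eq0F !eqxx /= addr0 add0r normr1.
have e1_neq0 : e1 != 0 by apply: lorentz_cone_neq0; rewrite mxE !eqxx ltr01.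
have u_neq0 : u != 0.
  by apply: lorentz_cone_neq0; rewrite !mxE inord1_eq0F !eqxx add0r ltr01.
have A_e1 : A *m e1 = 0 *: e1.
  by rewrite scale0r mulmxDl !mul_delta_mx_0 ?addr0 // ord0_eq_inord1F.
have A_u : A *m u = 1 *: u.
  rewrite scale1r mulmxDr !mulmxDl !mul_delta_mx.
  by rewrite !mul_delta_mx_0 ?addr0 // ord0_eq_inord1F.
have spec0 : L_eigenvalue (phi A) 0 by apply/Hphi/(eigenvector_L_eigenvalue e1_neq0).
have spec1 : L_eigenvalue (phi A) 1 by apply/Hphi/(eigenvector_L_eigenvalue u_neq0).
have specN : L_eigenvalue (- phi A) 0.
  rewrite -linearN; apply/Hphi/(eigenvector_L_eigenvalue e1_neq0) => //.
  by rewrite mulNmx A_e1 !scale0r oppr0.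
rewrite det_mx2; apply: det_eq0_of_L_eigen_conds
  (L_eigenvalue_cond spec0) (L_eigenvalue_cond spec1) _.
by have := L_eigenvalue_cond specN; rewrite !mxE.
Qed.
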